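(* Let $C$ be a family of completely positive (symmetric, real) tensors of orders $m\ge 2$ and dimensions $n\ge 2$ satisfying: (1) for all $m,n\ge 2$ there is at least one $m$th order $n$-dimensional tensor in $C$; (2) every matrix (order $m=2$) in $C$ is positive definite; (3) whenever $\mathcal{A}=(a_{i_1\dots i_m})\in C$ has order $m\ge 3$ and dimension $n$, the $(m-1)$th order $n$-dimensional sub-tensor $\mathcal{A}_1=(a_{1 i_2\dots i_m})$ obtained by fixing the first index $i_1=1$ also belongs to $C$. Then every tensor in $C$ is strongly completely positive, and every even order tensor in $C$ is positive definite.
   Context: For $\mathbf{u}\in\mathbb{R}^n$, $\mathbf{u}^m$ is the tensor with entries $u_{i_1}\cdots u_{i_m}$. A symmetric tensor $\mathcal{A}$ of order $m$ and dimension $n$ is completely positive if $\mathcal{A}=(\mathbf{u}^{(1)})^m+\dots+(\mathbf{u}^{(r)})^m$ for some nonnegative $\mathbf{u}^{(1)},\dots,\mathbf{u}^{(r)}\in\mathbb{R}^n$, and strongly completely positive if such a decomposition exists with $\{\mathbf{u}^{(1)},\dots,\mathbf{u}^{(r)}\}$ spanning $\mathbb{R}^n$. For even $m$, $\mathcal{A}$ is positive definite if $\sum_{i_1,\dots,i_m}a_{i_1\dots i_m}x_{i_1}\cdots x_{i_m}>0$ for all nonzero $\mathbf{x}\in\mathbb{R}^n$. *)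

From HB Require Import structures.
From mathcomp Require Import all_boot all_order all_algebra all_fingroup.
Set Implicit Arguments. Unset Strict Implicit. Unset Printing Implicit Defensive.
Import Order.TTheory GRing.Theory Num.Theory.
Local Open Scope ring_scope.

Definition tensor (R : Type) (m n : nat) := {ffun {ffun 'I_m -> 'I_n} -> R}.

Section Tensors.
Variable R : realFieldType.

Definition symmetric_tensor m n (A : tensor R m n) : Prop :=
  forall (s : 'S_m) (idx : {ffun 'I_m -> 'I_n}),
    A [ffun k => idx (s k)] = A idx.

Definition rank1 m n (u : 'rV[R]_n) : tensor R m n :=
  [ffun idx : {ffun 'I_m -> 'I_n} => \prod_(k < m) u 0 (idx k)].

Definition cp_decomp m n (A : tensor R m n) r (U : 'M[R]_(r, n)) : Prop :=
  (forall j i, 0 <= U j i) /\ A = \sum_(j < r) rank1 m (row j U).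

Definition completely_positive m n (A : tensor R m n) : Prop :=
  symmetric_tensor A /\ exists r (U : 'M[R]_(r, n)), cp_decomp A U.

(* strongly CP: some nonnegative decomposition whose vectors span R^n
   (row_full U : the rows of U span 'rV_n) *)
Definition strongly_completely_positive m n (A : tensor R m n) : Prop :=
  symmetric_tensor A /\
  exists r (U : 'M[R]_(r, n)), cp_decomp A U /\ row_full U.

Definition tensor_form m n (A : tensor R m n) (x : 'rV[R]_n) : R :=
  \sum_(idx : {ffun 'I_m -> 'I_n}) A idx * \prod_(k < m) x 0 (idx k).

Definition positive_definite m n (A : tensor R m n) : Prop :=
  forall x : 'rV[R]_n, x != 0 -> 0 < tensor_form A x.

(* sub-tensor A_1 = (a_{1 i_2 ... i_m}) obtained by fixing the first index to
   the first coordinate (ord0) *)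
Definition sub_first m n (A : tensor R m.+1 n.+1) : tensor R m n.+1 :=
  [ffun j : {ffun 'I_m -> 'I_n.+1} =>
     A [ffun k : 'I_m.+1 => if unlift ord0 k is Some k' then j k' else ord0]].

End Tensors.

From HB Require Import structures.
From mathcomp Require Import all_boot all_order all_algebra all_fingroup.

Set Implicit Arguments.
Unset Strict Implicit.
Unset Printing Implicit Defensive.

Import Order.TTheory GRing.Theory Num.Theory.
Local Open Scope ring_scope.

(* Let A = sum_j u_j^m lie in C and let x be orthogonal to every u_j.  Fixing
   the first index of a combination sum_j w_j u_j^m gives the combination
   sum_j (w_j u_j1) u_j^(m-1) of the same vectors, so by condition (3) there is
   an order-2 tensor sum_j w'_j u_j u_j^T in C; its quadratic form vanishes at
   x, hence x = 0 by condition (2).  Thus the u_j span R^n, and for even m the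
   form A x^m = sum_j (u_j . x)^m is a sum of even powers which are not all
   zero when x <> 0. *)

Section RankOneCombinations.
Variable R : realFieldType.

Definition rank1_comb m n r (w : 'I_r -> R) (U : 'M[R]_(r, n)) : tensor R m n :=
  [ffun idx : {ffun 'I_m -> 'I_n} => \sum_j w j * \prod_(k < m) U j (idx k)].

Lemma cp_decomp_rank1_comb m n (A : tensor R m n) r (U : 'M[R]_(r, n)) :
  cp_decomp A U -> A = rank1_comb m (fun=> 1) U.
Proof.
case=> _ ->; apply/ffunP => idx; rewrite sum_ffunE !ffunE.
by apply: eq_bigr => j _; rewrite ffunE mul1r; apply: eq_bigr => k _; rewrite mxE.
Qed.

Lemma tensor_form_rank1_comb m n r (w : 'I_r -> R) (U : 'M[R]_(r, n))
    (x : 'rV[R]_n) :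
  tensor_form (rank1_comb m w U) x = \sum_j w j * (x *m U^T) 0 j ^+ m.
Proof.
rewrite /tensor_form; under eq_bigr => idx _ do rewrite ffunE mulr_suml.
rewrite exchange_big /=; apply: eq_bigr => j _.
have -> : (x *m U^T) 0 j = \sum_i U j i * x 0 i.
  by rewrite mxE; apply: eq_bigr => i _; rewrite mxE mulrC.
rewrite -[in RHS](card_ord m) -prodr_const bigA_distr_bigA mulr_sumr.
by apply: eq_bigr => idx _; rewrite -mulrA -big_split.
Qed.

Lemma sub_first_rank1_comb m n r (w : 'I_r -> R) (U : 'M[R]_(r, n.+1)) :
  sub_first (rank1_comb m.+1 w U) = rank1_comb m (fun j => w j * U j ord0) U.
Proof.
apply/ffunP => idx; rewrite !ffunE; apply: eq_bigr => j _.
rewrite big_ord_recl ffunE unlift_none mulrA; congr (_ * _).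
by apply: eq_bigr => k _; rewrite ffunE liftK.
Qed.

End RankOneCombinations.

Lemma row_full_trmx_ker (F : fieldType) m n (U : 'M[F]_(m, n)) :
  (forall x : 'rV_n, x *m U^T = 0 -> x = 0) -> row_full U.
Proof. by move=> /inj_row_free; rewrite /row_free /row_full mxrank_tr. Qed.

Lemma sum_even_powers_gt0 (R : realDomainType) m r (v : 'rV[R]_r) :
  ~~ odd m -> v != 0 -> 0 < \sum_j v 0 j ^+ m.
Proof.
move=> m_even; apply: contraNT; rewrite -leNgt => sum_le0.
have powers_ge0 j : true -> 0 <= v 0 j ^+ m by rewrite exprn_even_ge0.
have /eqP sum_eq0 : \sum_j v 0 j ^+ m == 0 by rewrite eq_le sum_le0 sumr_ge0.
apply/eqP/matrixP => i j; rewrite (ord1 i) mxE.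
have /eqP := psumr_eq0P powers_ge0 sum_eq0 (i := j) isT.
by rewrite expf_eq0 => /andP[_ /eqP].
Qed.

Section CompletelyPositiveFamily.
Variables (R : realFieldType) (C : forall m n : nat, tensor R m n -> Prop).
Hypothesis C_order_ge2 : forall m n (A : tensor R m n), C A -> (2 <= m)%N.
Hypothesis C_matrix_pd : forall n (A : tensor R 2 n), C A -> positive_definite A.
Hypothesis C_sub_first : forall m n (A : tensor R m.+1 n.+1),
  (3 <= m.+1)%N -> C A -> C (sub_first A).

Lemma C_rank1_comb_ker m n r (w : 'I_r -> R) (U : 'M[R]_(r, n.+1))
    (x : 'rV[R]_n.+1) :
  C (rank1_comb m w U) -> x *m U^T = 0 -> x = 0.
Proof.
elim: m w => [|m IH] w CA xU0; first by have := C_order_ge2 CA.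
case: m IH CA => [|[|m]] IH CA.
- by have := C_order_ge2 CA.
- apply/eqP; apply: contraT => x_neq0.
  have := C_matrix_pd CA x_neq0; rewrite tensor_form_rank1_comb xU0.
  by rewrite big1 ?ltxx // => j _; rewrite mxE expr0n mulr0.
- apply: (IH (fun j => w j * U j ord0)) => //.
  by rewrite -sub_first_rank1_comb; exact: C_sub_first.
Qed.

End CompletelyPositiveFamily.

Theorem theorem4p1 (R : realFieldType)
  (C : forall m n : nat, tensor R m n -> Prop)
  (HC : forall m n (A : tensor R m n), C m n A ->
          [/\ (2 <= m)%N, (2 <= n)%N & completely_positive A])
  (H1 : forall m n : nat, (2 <= m)%N -> (2 <= n)%N -> exists A, C m n A)
  (H2 : forall n (A : tensor R 2 n), C 2%N n A -> positive_definite A)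
  (H3 : forall m n (A : tensor R m.+1 n.+1), (3 <= m.+1)%N ->
          C m.+1 n.+1 A -> C m n.+1 (sub_first A)) :
  forall m n (A : tensor R m n), C m n A ->
    strongly_completely_positive A /\ (~~ odd m -> positive_definite A).
Proof.
move=> m [|n] A CA; first by have [] := HC _ _ _ CA.
have [_ _ [symA [r [U decU]]]] := HC _ _ _ CA.
have C_order_ge2 m' n' (B : tensor R m' n') : C m' n' B -> (2 <= m')%N.
  by case/HC.
have ker_U (x : 'rV[R]_n.+1) : x *m U^T = 0 -> x = 0.
  apply: (C_rank1_comb_ker C_order_ge2 H2 H3 (m := m) (w := fun=> 1)).
  by rewrite -(cp_decomp_rank1_comb decU).
split; first by split=> //; exists r, U; split; last exact: row_full_trmx_ker.
move=> m_even x x_neq0; rewrite (cp_decomp_rank1_comb decU).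
rewrite tensor_form_rank1_comb; under eq_bigr do rewrite mul1r.
by apply: sum_even_powers_gt0; last by apply: contra_neq x_neq0; apply: ker_U.
Qed.
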